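(* Let $\langle C_\delta:\delta\in\mathrm{Lim}\rangle$ be a $\clubsuit$-sequence and define $\mathrm{Lim}_n$ and $C^n_\delta$ as below. Then for every $n\in\omega$ and every uncountable $S\subseteq\omega_1$, the set $\{\delta\in\mathrm{Lim}_n: C^n_\delta\subseteq S\}$ is stationary in $\omega_1$.
   Context: $\mathrm{Lim}$ is the set of nonzero countable limit ordinals. A $\clubsuit$-sequence is a sequence $\langle C_\delta:\delta\in\mathrm{Lim}\rangle$ with $C_\delta\subseteq\delta$ of order type $\omega$, $\sup C_\delta=\delta$, such that for every uncountable $S\subseteq\omega_1$ the set $\{\delta\in\mathrm{Lim}:C_\delta\subseteq S\}$ is stationary. Define $\mathrm{Lim}_0=\mathrm{Lim}$, $\mathrm{Lim}_{n+1}=\{\delta\in\mathrm{Lim}:C_\delta\subseteq\mathrm{Lim}_n\}$; $C^0_\delta=C_\delta$ for $\delta\in\mathrm{Lim}_0$, and $C^{n+1}_\delta=\bigcup_{\xi\in C_\delta}C^n_\xi$ for $\delta\in\mathrm{Lim}_{n+1}$. *)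

(* omega_1 is modelled abstractly as a type T with a strict
   relation lt that is a well-order, in which every proper initial segment is
   countable and which is itself uncountable.  Such an order is (up to unique
   isomorphism) exactly (omega_1, <). *)
From Stdlib Require Import Relations Wellfounded.

Section Omega1.
Context {T : Type} (lt : T -> T -> Prop).

Definition countable_set (A : T -> Prop) : Prop :=
  exists f : T -> nat, forall x y, A x -> A y -> f x = f y -> x = y.

Definition uncountable_set (A : T -> Prop) : Prop := ~ countable_set A.

Definition is_omega1 : Prop :=
  (forall x, ~ lt x x) /\
  (forall x y z, lt x y -> lt y z -> lt x z) /\
  (forall x y, lt x y \/ x = y \/ lt y x) /\
  well_founded lt /\
  (forall x, countable_set (fun y => lt y x)) /\
  uncountable_set (fun _ => True).

Definition subset (A B : T -> Prop) : Prop := forall x, A x -> B x.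

(* nonzero limit ordinal *)
Definition is_lim (d : T) : Prop :=
  (exists y, lt y d) /\ (forall y, lt y d -> exists z, lt y z /\ lt z d).

Definition unbounded (C : T -> Prop) : Prop :=
  forall x, exists y, lt x y /\ C y.

Definition closed (C : T -> Prop) : Prop :=
  forall d, is_lim d ->
    (forall y, lt y d -> exists z, lt y z /\ lt z d /\ C z) -> C d.

Definition club (C : T -> Prop) : Prop := closed C /\ unbounded C.

Definition stationary (S : T -> Prop) : Prop :=
  forall C, club C -> exists x, C x /\ S x.

Definition ladder (d : T) (A : T -> Prop) : Prop :=
  exists f : nat -> T,
    (forall n, lt (f n) (f (S n))) /\
    (forall x, A x <-> exists n, f n = x) /\
    (forall n, lt (f n) d) /\
    (forall y, lt y d -> exists n, lt y (f n)).

(* clubsuit-sequence: the value of C at non-limits is irrelevant *)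
Definition clubsuit_seq (C : T -> T -> Prop) : Prop :=
  (forall d, is_lim d -> ladder d (C d)) /\
  (forall S, uncountable_set S ->
     stationary (fun d => is_lim d /\ subset (C d) S)).

Fixpoint LimN (C : T -> T -> Prop) (n : nat) (d : T) : Prop :=
  match n with
  | O => is_lim d
  | S m => is_lim d /\ subset (C d) (LimN C m)
  end.

Fixpoint CN (C : T -> T -> Prop) (n : nat) (d : T) : T -> Prop :=
  match n with
  | O => C d
  | S m => fun x => exists xi, C d xi /\ CN C m xi x
  end.

End Omega1.

(** The case [n = 0] is the clubsuit property itself.
    For the step, the set [D] of [d] in [Lim_n] with [C^n_d ⊆ S] is stationary
    by induction, hence uncountable: a countable subset of omega_1 is bounded,
    and the club of ordinals above a bound misses it.  The clubsuit property
    applied to [D] gives stationarily many limits [d] with [C_d ⊆ D], and each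
    such [d] lies in [Lim_(n+1)] with [C^(n+1)_d = ⋃_(ξ ∈ C_d) C^n_ξ ⊆ S]. *)
From Stdlib Require Import Classical ClassicalEpsilon Cantor.

Section Countable.
Context {T : Type}.

Lemma countable_singleton (x : T) : countable_set (fun y => y = x).
Proof.
  exists (fun _ => 0). intros y z -> ->. reflexivity.
Qed.

Lemma countable_add_point (A : T -> Prop) (x : T) :
  countable_set A -> countable_set (fun y => A y \/ y = x).
Proof.
  intros [f Hf].
  exists (fun y => if excluded_middle_informative (y = x) then 0 else S (f y)).
  intros y z Hy Hz.
  destruct (excluded_middle_informative (y = x)) as [->|Hyx],
           (excluded_middle_informative (z = x)) as [->|Hzx];
    try discriminate; intros E.
  - reflexivity.
  - injection E. apply Hf; [destruct Hy | destruct Hz]; tauto.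
Qed.

Lemma countable_union (A : T -> Prop) (B : T -> T -> Prop) :
  countable_set A -> (forall a, A a -> countable_set (B a)) ->
  countable_set (fun y => exists a, A a /\ B a y).
Proof.
  intros [f Hf] HB.
  set (inj a := epsilon (inhabits (fun _ : T => 0))
         (fun g => forall x y, B a x -> B a y -> g x = g y -> x = y)).
  assert (Hinj : forall a, A a ->
            forall x y, B a x -> B a y -> inj a x = inj a y -> x = y)
    by (intros a Ha; exact (epsilon_spec _ _ (HB a Ha))).
  set (sel y := epsilon (inhabits y) (fun a => A a /\ B a y)).
  exists (fun y => to_nat (f (sel y), inj (sel y) y)).
  intros x y Hx Hy E.
  pose proof (epsilon_spec (inhabits x) _ Hx) as [HAx HBx]; fold (sel x) in HAx, HBx.
  pose proof (epsilon_spec (inhabits y) _ Hy) as [HAy HBy]; fold (sel y) in HAy, HBy.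
  apply (f_equal of_nat) in E. rewrite !cancel_of_to in E.
  injection E as Ef Einj.
  assert (Es : sel x = sel y) by (apply Hf; assumption).
  rewrite Es in HBx, Einj.
  exact (Hinj _ HAy x y HBx HBy Einj).
Qed.

Lemma countable_misses_point (A : T -> Prop) :
  uncountable_set (fun _ : T => True) -> countable_set A -> exists b, ~ A b.
Proof.
  intros Hunc [f Hf]. apply NNPP. intros Hall. apply Hunc.
  exists f. intros x y _ _. apply Hf;
    apply NNPP; intros HnA; apply Hall; eauto.
Qed.

End Countable.

Section Omega1.
Context {T : Type} (lt : T -> T -> Prop) (Hom : is_omega1 lt).

Lemma countable_le_segment (s : T) : countable_set (fun y => lt y s \/ y = s).
Proof.
  apply countable_add_point. apply Hom.
Qed.

(* A point outside the downward closure of [A] exists by uncountability and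
   bounds [A] strictly, by trichotomy. *)
Lemma countable_bounded (A : T -> Prop) :
  countable_set A -> exists b, forall s, A s -> lt s b.
Proof.
  destruct Hom as (_ & _ & Htri & _ & _ & Hunc).
  intros HA.
  assert (Hdown : countable_set (fun y => exists a, A a /\ (lt y a \/ y = a)))
    by (apply countable_union; [exact HA | intros a _; apply countable_le_segment]).
  destruct (countable_misses_point _ Hunc Hdown) as [b Hb].
  exists b. intros s Hs.
  destruct (Htri s b) as [Hsb | [Hsb | Hbs]]; [exact Hsb | |];
    exfalso; apply Hb; exists s; auto.
Qed.

Lemma club_gt (b : T) : club lt (fun y => lt b y).
Proof.
  destruct Hom as (_ & Htr & _).
  split.
  - intros d [[y Hy] _] Hcof.
    destruct (Hcof y Hy) as (z & _ & Hzd & Hbz). eauto.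
  - intros x.
    destruct (countable_bounded _ (countable_add_point _ b (countable_singleton x)))
      as [y Hy].
    exists y. split; apply Hy; auto.
Qed.

Lemma stationary_uncountable (S : T -> Prop) :
  stationary lt S -> uncountable_set S.
Proof.
  destruct Hom as (Hirr & Htr & _).
  intros HS Hcount.
  destruct (countable_bounded _ Hcount) as [b Hb].
  destruct (HS _ (club_gt b)) as (x & Hbx & Hx).
  apply (Hirr b). eauto.
Qed.

End Omega1.

Lemma stationary_weaken {T : Type} (lt : T -> T -> Prop) (A B : T -> Prop) :
  subset A B -> stationary lt A -> stationary lt B.
Proof.
  intros HAB HA D HD. destruct (HA D HD) as (x & HDx & HAx). eauto.
Qed.

Lemma LimN_CN_succ {T : Type} (lt : T -> T -> Prop) (C : T -> T -> Prop)
    (n : nat) (S : T -> Prop) (d : T) :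
  is_lim lt d ->
  subset (C d) (fun xi => LimN lt C n xi /\ subset (CN C n xi) S) ->
  LimN lt C (Datatypes.S n) d /\ subset (CN C (Datatypes.S n) d) S.
Proof.
  intros Hd HCd. split.
  - split; [exact Hd |]. intros xi Hxi. apply (HCd xi Hxi).
  - intros y (xi & Hxi & Hy). exact (proj2 (HCd xi Hxi) y Hy).
Qed.

Theorem mainTheorem16 (T : Type) (lt : T -> T -> Prop) (C : T -> T -> Prop) :
  is_omega1 lt ->
  clubsuit_seq lt C ->
  forall (n : nat) (S : T -> Prop),
    uncountable_set S ->
    stationary lt (fun d => LimN lt C n d /\ subset (CN C n d) S).
Proof.
  intros Hom [_ Hclub] n. induction n as [|n IH]; intros S HS.
  - exact (Hclub S HS).
  - apply (stationary_weaken lt (fun d => is_lim lt d /\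
             subset (C d) (fun xi => LimN lt C n xi /\ subset (CN C n xi) S))).
    + intros d [Hd HCd]. exact (LimN_CN_succ lt C n S d Hd HCd).
    + exact (Hclub _ (stationary_uncountable lt Hom _ (IH S HS))).
Qed.
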